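(* Let $V=\{v_1,\dots,v_m\}\subset\mathbb{R}^d$ be a finite set of points and $r\in\mathbb{R}^d$. Let $S\subset V$ be $r$-balanced and let $\{S_1,\dots,S_k\}$ be the family of all minimal $r$-balanced subsets of $S$. Then $S=\bigcup_{i=1}^k S_i$.
   Context: A subset $S\subset V$ is $r$-balanced if $r\in\mathrm{relint}(\mathrm{conv}(S))$ (relative interior within the affine hull of $S$); it is minimal $r$-balanced if it is $r$-balanced and no proper subset of it is $r$-balanced. *)

From HB Require Import structures.
From mathcomp Require Import all_boot all_order all_algebra.
From mathcomp Require Import finmap.
From mathcomp Require Import reals.
Set Implicit Arguments. Unset Strict Implicit. Unset Printing Implicit Defensive.
Import Order.TTheory GRing.Theory Num.Theory.
Local Open Scope ring_scope.
Local Open Scope fset_scope.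

Definition in_conv (R : realType) (d : nat) (S : {fset 'rV[R]_d}) (x : 'rV[R]_d) : Prop :=
  exists lam : 'rV[R]_d -> R,
    (forall v, v \in S -> 0 <= lam v) /\
    \sum_(v <- S) lam v = 1 /\
    \sum_(v <- S) lam v *: v = x.

Definition in_aff (R : realType) (d : nat) (S : {fset 'rV[R]_d}) (x : 'rV[R]_d) : Prop :=
  exists lam : 'rV[R]_d -> R,
    \sum_(v <- S) lam v = 1 /\
    \sum_(v <- S) lam v *: v = x.

Definition sqdist (R : realType) (d : nat) (x y : 'rV[R]_d) : R :=
  \sum_(i < d) (x ord0 i - y ord0 i) ^+ 2.

Definition in_relint_conv (R : realType) (d : nat) (S : {fset 'rV[R]_d}) (r : 'rV[R]_d) : Prop :=
  in_conv S r /\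
  exists eps : R, 0 < eps /\
    forall y, in_aff S y -> sqdist y r < eps -> in_conv S y.

Definition balanced (R : realType) (d : nat) (r : 'rV[R]_d) (S : {fset 'rV[R]_d}) : Prop :=
  in_relint_conv S r.

Definition minimal_balanced (R : realType) (d : nat) (r : 'rV[R]_d) (S : {fset 'rV[R]_d}) : Prop :=
  balanced r S /\ forall T : {fset 'rV[R]_d}, T `<` S -> ~ balanced r T.

From HB Require Import structures.
From mathcomp Require Import all_boot all_order all_algebra.
From mathcomp Require Import finmap.
From mathcomp Require Import reals.
From mathcomp Require Import ring lra.
From Stdlib Require Import Classical_Prop.
Set Implicit Arguments. Unset Strict Implicit. Unset Printing Implicit Defensive.
Import Order.TTheory GRing.Theory Num.Theory.
Local Open Scope ring_scope.
Local Open Scope fset_scope.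

(* For a finite S, r lies in the relative interior of conv S exactly when r is a
   convex combination of S with all weights positive. One direction perturbs r away
   from each point of S inside the affine hull; the other uses that points of the
   hull close to r have affine weights close to those of r, because the linear map
   from weights to (point, total weight) has a bounded right inverse on its image.
   Now let x lie in a balanced S which is not minimal, with T a proper balanced
   subset. If x is not in T, move the positive weights a of S away from the weights
   b of T (extended by 0) along a + t (a - b) until a first weight vanishes; the
   weight of x only grows, so the support is a smaller balanced set containing x.
   Induction on |S| gives a minimal balanced subset of S containing x. *)

Section BoundedPreimage.
Local Open Scope ring_scope.
Variable R : numFieldType.

Lemma bounded_row_preimage m n (M : 'M[R]_(m, n)) :
  exists2 K, 0 < K & forall (w : 'rV_n) e, (w <= M)%MS -> 0 <= e ->
    (forall j, `|w 0 j| <= e) ->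
    exists2 c : 'rV_m, c *m M = w & forall i, `|c 0 i| <= K * e.
Proof.
pose P := pinvmx M; pose K := 1 + \sum_i \sum_j `|P j i|.
have sumP_ge0 : 0 <= \sum_i \sum_j `|P j i|.
  by apply: sumr_ge0 => i _; apply: sumr_ge0.
exists K => [|w e wM e0 we]; first by rewrite ltr_pwDl.
exists (w *m P) => [|i]; first exact: mulmxKpV.
rewrite mxE; apply: le_trans (ler_norm_sum _ _ _) _.
apply: (@le_trans _ _ (\sum_j e * `|P j i|)).
  by apply: ler_sum => j _; rewrite normrM ler_wpM2r.
rewrite -mulr_sumr mulrC ler_wpM2r // /K [X in _ <= _ + X](bigD1 i) //= addrCA lerDl.
by rewrite addr_ge0 // sumr_ge0 // => k _; apply: sumr_ge0.
Qed.

End BoundedPreimage.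

Section Balanced.
Local Open Scope ring_scope.
Variables (R : realType) (d : nat).
Implicit Types (S T : {fset 'rV[R]_d}) (r v x y : 'rV[R]_d) (a b g : 'rV[R]_d -> R).

Lemma sqdist_ge0 x y : 0 <= sqdist x y.
Proof. by apply: sumr_ge0 => i _; apply: sqr_ge0. Qed.

Lemma sqdist_lerp x y t : sqdist (x + t *: (y - x)) x = t ^+ 2 * sqdist y x.
Proof. by rewrite /sqdist mulr_sumr; apply: eq_bigr => i _; rewrite !mxE; ring. Qed.

Lemma sqdist_lt_norm_le x y e j : 0 <= e -> sqdist x y < e ^+ 2 ->
  `|x 0 j - y 0 j| <= e.
Proof.
move=> e0 xy; have : (x 0 j - y 0 j) ^+ 2 <= sqdist x y.
  rewrite /sqdist (bigD1 j) //= lerDl.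
  by apply: sumr_ge0 => i _; apply: sqr_ge0.
by rewrite ler_norml => ?; apply/andP; split; nra.
Qed.

Definition affine_coef S x a :=
  \sum_(v <- S) a v = 1 /\ \sum_(v <- S) a v *: v = x.

Definition in_pos_conv S x :=
  exists a, (forall v, v \in S -> 0 < a v) /\ affine_coef S x a.

Lemma affine_coef_pred1 S v : v \in S -> affine_coef S v (fun u => (u == v)%:R).
Proof.
move=> vS; rewrite /affine_coef !(big_fsetD1 v vS) /= eqxx scale1r.
by rewrite !big1_fset ?addr0 // => u; rewrite !inE => /andP[/negbTE-> _]; rewrite ?scale0r.
Qed.

Lemma affine_coef_lerp S x y a b t : affine_coef S x a -> affine_coef S y b ->
  affine_coef S (x + t *: (y - x)) (fun v => a v + t * (b v - a v)).
Proof.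
move=> [a1 ax] [b1 by_]; split.
  by rewrite big_split /= -mulr_sumr sumrB a1 b1 subrr mulr0 addr0.
under eq_bigr do rewrite scalerDl -scalerA scalerBl.
by rewrite big_split /= -scaler_sumr sumrB ax by_.
Qed.

Lemma affine_coef_fsubset S T x b : T `<=` S -> affine_coef T x b ->
  affine_coef S x (fun v => if v \in T then b v else 0).
Proof.
move=> TS [b1 bx]; split.
  rewrite -(big_fset_incl _ TS) => [|v _ /negbTE-> //].
  by rewrite -b1; apply: eq_big_seq => v ->.
rewrite -(big_fset_incl _ TS) => [|v _ /negbTE->]; last by rewrite scale0r.
by rewrite -bx; apply: eq_big_seq => v ->.
Qed.




Section AffineMatrix.
Variable S : {fset 'rV[R]_d}.
Local Notation n := (size S).

Definition coef_row a : 'rV[R]_n := \row_i a (nth 0 S i).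

Definition coef_fun (c : 'rV[R]_n) v : R := \sum_(i < n | nth 0 S i == v) c 0 i.

Definition affine_mx : 'M[R]_(n, d + 1) :=
  row_mx (\matrix_i nth 0 S i) (const_mx 1).

Lemma coef_fun_nth c (i : 'I_n) : coef_fun c (nth 0 S i) = c 0 i.
Proof.
rewrite /coef_fun (eq_bigl (pred1 i)) ?big_pred1_eq // => j /=.
by rewrite nth_uniq ?fset_uniq.
Qed.

Lemma coef_funK c : coef_row (coef_fun c) = c.
Proof. by apply/rowP => i; rewrite mxE coef_fun_nth. Qed.

Lemma coef_row_mulmx a : coef_row a *m affine_mx =
  row_mx (\sum_(v <- S) a v *: v) (const_mx (\sum_(v <- S) a v)).
Proof.
rewrite mul_mx_row; congr row_mx.
  rewrite mulmx_sum_row (big_nth 0) big_mkord.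
  by apply: eq_bigr => i _; rewrite rowK mxE.
apply/rowP => j; rewrite !mxE (big_nth 0) big_mkord.
by apply: eq_bigr => i _; rewrite !mxE mulr1.
Qed.

Lemma small_affine_dependence : exists2 K, 0 < K &
  forall c0 e, 0 <= e -> \sum_(v <- S) c0 v = 0 ->
  (forall j, `|(\sum_(v <- S) c0 v *: v) 0 j| <= e) ->
  exists c, [/\ \sum_(v <- S) c v = 0,
    \sum_(v <- S) c v *: v = \sum_(v <- S) c0 v *: v
    & forall v, v \in S -> `|c v| <= K * e].
Proof.
have [K K0 preimage] := bounded_row_preimage affine_mx.
exists K => // c0 e e0 c0_sum c0_small.
have [|c' c'M c'_small] := preimage _ e (submxMl (coef_row c0) _) e0.
  move=> j; rewrite coef_row_mulmx c0_sum -(splitK j).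
  by case: (split j) => k; rewrite ?row_mxEl ?row_mxEr ?mxE ?normr0.
exists (coef_fun c'); move: c'M; rewrite -[c' in c' *m _]coef_funK !coef_row_mulmx.
case/eq_row_mx => -> /rowP/(_ 0); rewrite !mxE c0_sum => ->; split => // v vS.
have vS_idx : (index v S < n)%N by rewrite index_mem.
by rewrite -(nth_index 0 vS) -[index v S]/(nat_of_ord (Ordinal vS_idx)) coef_fun_nth.
Qed.

End AffineMatrix.

Lemma in_pos_conv_balanced S r : in_pos_conv S r -> balanced r S.
Proof.
move=> [a [a0 ar]]; split; first by exists a; split => // v /a0/ltW.
pose m := \big[Num.min/1]_(v <- S) a v.
have m0 : 0 < m.
  rewrite /m big_seq; elim/big_ind: _ => // u w u0 w0.
  by rewrite lt_min u0 w0.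
have m_le v : v \in S -> m <= a v by move=> vS; apply: ge_bigmin_seq.
have [K K0 small] := small_affine_dependence S.
have e0 : 0 < m / K by apply: divr_gt0.
exists ((m / K) ^+ 2); split => [|y [mu muy] yr]; first exact: exprn_gt0.
have [||c [c_sum c_vec c_small]] := small (fun v => mu v - a v) _ (ltW e0).
- by rewrite sumrB muy.1 ar.1 subrr.
- move=> j; under eq_bigr do rewrite scalerBl.
  by rewrite sumrB muy.2 ar.2 !mxE; apply: sqdist_lt_norm_le (ltW e0) yr.
exists (fun v => a v + c v); split; [|split].
- move=> v vS; have := c_small v vS; rewrite mulrC divfK ?gt_eqF //.
  rewrite ler_norml => /andP[mc _]; have := m_le v vS; lra.
- by rewrite big_split /= ar.1 c_sum addr0.
- under eq_bigr do rewrite scalerDl.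
  rewrite big_split /= c_vec ar.2; under eq_bigr do rewrite scalerBl.
  by rewrite sumrB muy.2 ar.2 addrC subrK.
Qed.

Lemma balanced_coef_gt0 S r v : balanced r S -> v \in S ->
  exists a, [/\ forall u, u \in S -> 0 <= a u, affine_coef S r a & 0 < a v].
Proof.
move=> [[a0 [_ a0r]] [eps [eps0 near_conv]]] vS.
set D := sqdist v r; have D0 : 0 <= D := sqdist_ge0 v r.
set t := eps / (eps + D + 1).
have t0 : 0 < t by apply: divr_gt0 => //; lra.
have t1 : t < 1 by rewrite ltr_pdivrMr; lra.
have tD : t * D < eps by rewrite mulrAC ltr_pdivrMr ?ltr_pM2l //; lra.
(* [y] is a point of the hull near [r], hence in conv S, and [r] lies strictly
   between [y] and [v]. *)
set y := r + - t *: (v - r).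
have [mu [mu0 muy]] : in_conv S y.
  apply: near_conv; first by eexists; apply: affine_coef_lerp a0r (affine_coef_pred1 vS).
  rewrite sqdist_lerp sqrrN -/D.
  by apply: le_lt_trans tD; rewrite expr2 -mulrA ler_piMl ?(ltW t1) // mulr_ge0 // ltW.
set s := t / (1 + t).
have ry : y + s *: (v - y) = r.
  have -> : v - y = (1 + t) *: (v - r).
    by rewrite /y opprD scaleNr opprK addrA scalerDl scale1r.
  by rewrite scalerA divfK ?gt_eqF /y ?scaleNr ?subrK //; lra.
have s0 : 0 < s by apply: divr_gt0; lra.
have s1 : s < 1 by rewrite ltr_pdivrMr; lra.
exists (fun u => mu u + s * ((u == v)%:R - mu u)); split.
- move=> u uS; have := mu0 u uS; case: (u == v) => /=; nra.
- by rewrite -ry; apply: affine_coef_lerp muy (affine_coef_pred1 vS).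
- by rewrite eqxx /=; have := mu0 v vS; nra.
Qed.

Lemma balanced_in_pos_conv S r : balanced r S -> in_pos_conv S r.
Proof.
move=> Sbal.
have pos_on (L : seq 'rV[R]_d) : {subset L <= S} ->
    exists a, [/\ forall v, v \in S -> 0 <= a v, affine_coef S r a
              & forall v, v \in L -> 0 < a v].
  elim: L => [_|v L IH /allP/= /andP[vS /allP LS]].
    by have [[a [a0 ar]] _] := Sbal; exists a.
  have [a [a0 ar a_pos]] := IH LS.
  have [b [b0 br bv]] := balanced_coef_gt0 Sbal vS.
  exists (fun u => a u + 2^-1 * (b u - a u)); split.
  - by move=> u uS; have := a0 u uS; have := b0 u uS; lra.
  - by have := affine_coef_lerp 2^-1 ar br; rewrite subrr scaler0 addr0.
  - move=> u; rewrite inE => /predU1P[->|uL]; first by have := a0 v vS; lra.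
    by have := a_pos u uL; have := b0 u (LS u uL); lra.
have [a [_ ar a_pos]] := pos_on S (fun v vS => vS).
by exists a.
Qed.

Lemma exists_boundary_conv_coef S r x a b : x \in S ->
  (forall v, v \in S -> 0 < a v) -> affine_coef S r a -> affine_coef S r b ->
  b x < a x ->
  exists g, [/\ forall v, v \in S -> 0 <= g v, affine_coef S r g, 0 < g x
              & exists2 w, w \in S & g w = 0].
Proof.
move=> xS a0 ar br bx_lt.
pose q v := (b v - a v) / a v.
have [w0 _ q_max] := @arg_maxP _ _ S [` xS] xpredT (fun w : S => q (val w)) isT.
have [w wS abw] : exists2 w, w \in S & a w < b w.
  apply/hasP/negPn/negP => /hasPn b_le_a.
  have : \sum_(v <- S) (a v - b v) = 0 by rewrite sumrB ar.1 br.1 subrr.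
  rewrite (bigD1_seq x) ?fset_uniq //=.
  have : 0 <= \sum_(v <- S | v != x) (a v - b v).
    rewrite big_seq_cond; apply: sumr_ge0 => v /andP[vS _].
    by rewrite subr_ge0 leNgt b_le_a.
  lra.
(* [s^-1] is the largest step [t] keeping [a + t (a - b)] nonnegative on S. *)
set s := q (val w0).
have s0 : 0 < s.
  apply: lt_le_trans (q_max [` wS] isT); apply: divr_gt0; first lra.
  exact: a0.
exists (fun v => a v + - s^-1 * (b v - a v)); split.
- move=> v vS; have := q_max [` vS] isT; rewrite /= -/s /q ler_pdivrMr ?a0 //.
  by rewrite mulNr subr_ge0 ler_pdivrMl // mulrC.
- by have := affine_coef_lerp (- s^-1) ar br; rewrite subrr scaler0 addr0.
- have : 0 < s^-1 by rewrite invr_gt0.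
  have := a0 x xS; nra.
- have ba_neq0 : b (val w0) - a (val w0) != 0.
    by apply: contraTneq s0 => ba0; rewrite /s /q ba0 mul0r ltxx.
  by exists (val w0); [exact: valP | rewrite /s /q invf_div mulNr divfK ?addrN].
Qed.

Lemma in_pos_conv_support S x g : (forall v, v \in S -> 0 <= g v) ->
  affine_coef S x g -> in_pos_conv [fset v in S | 0 < g v] x.
Proof.
move=> g0 [g1 gx]; set S' := [fset _ in _ | _].
have S'S : S' `<=` S by apply/fsubsetP => v; rewrite !inE => /andP[].
have g_out v : v \in S -> v \notin S' -> g v = 0.
  by move=> vS; rewrite !inE vS /= -leNgt => gv; apply/le_anti; rewrite gv g0.
exists g; split; first by move=> v; rewrite !inE => /andP[].
split; rewrite (big_fset_incl _ S'S) // => v vS /(g_out _ vS) ->//.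
by rewrite scale0r.
Qed.

Lemma in_pos_conv_shrink S T r x : T `<=` S -> x \in S -> x \notin T ->
  in_pos_conv S r -> in_pos_conv T r ->
  exists S', [/\ S' `<` S, x \in S' & in_pos_conv S' r].
Proof.
move=> TS xS xT [a [a0 ar]] [b [_ br]].
have [|g [g0 gr gx [w wS gw]]] :=
  exists_boundary_conv_coef xS a0 ar (affine_coef_fsubset TS br).
  by rewrite (negbTE xT) a0.
exists [fset v in S | 0 < g v]; split.
- rewrite fproperEneq; apply/andP; split; last by apply/fsubsetP => v; rewrite !inE => /andP[].
  by apply/eqP => /fsetP/(_ w); rewrite !inE wS gw ltxx.
- by rewrite !inE xS gx.
- exact: in_pos_conv_support g0 gr.
Qed.

Lemma in_pos_conv_minimal_cover S r x : x \in S -> in_pos_conv S r ->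
  exists T, [/\ T `<=` S, minimal_balanced r T & x \in T].
Proof.
have [n] := ubnP #|`S|; elim: n S => // n IH S /ltnSE S_le xS Spos.
have from_smaller S' : S' `<` S -> x \in S' -> in_pos_conv S' r ->
    exists T, [/\ T `<=` S, minimal_balanced r T & x \in T].
  move=> S'S xS' S'pos.
  have [|T [TS' Tmin xT]] := IH S' _ xS' S'pos.
    exact: leq_trans (fproper_ltn_card S'S) S_le.
  by exists T; split => //; apply: fsubset_trans TS' (fproper_sub S'S).
have [[T TS Tbal]|Smin] := classic (exists2 T, T `<` S & balanced r T).
  have Tpos := balanced_in_pos_conv Tbal.
  have [xT|xT] := boolP (x \in T); first exact: from_smaller TS xT Tpos.
  have [S' [S'S xS' S'pos]] := in_pos_conv_shrink (fproper_sub TS) xS xT Spos Tpos.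
  exact: from_smaller S'S xS' S'pos.
exists S; split => //; split; first exact: in_pos_conv_balanced.
by move=> T TS Tbal; apply: Smin; exists T.
Qed.

End Balanced.

Theorem corollary1 (R : realType) (d : nat) (V S : {fset 'rV[R]_d}) (r : 'rV[R]_d) :
  S `<=` V -> balanced r S ->
  forall x : 'rV[R]_d,
    x \in S <-> exists T : {fset 'rV[R]_d}, [/\ T `<=` S, minimal_balanced r T & x \in T].
Proof.
move=> _ Sbal x; split => [xS|[T [TS _ xT]]]; last exact: (fsubsetP TS).
exact: in_pos_conv_minimal_cover xS (balanced_in_pos_conv Sbal).
Qed.
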